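(* Let $\mathcal{S}$ be a finite state space (possibly containing terminal states), let $\pi=\pi_d$ be a policy, and let $\mathbf{P}^{\pi}\in\mathbb{R}^{|\mathcal{S}|\times|\mathcal{S}|}$ be the induced state-transition matrix, $\mathbf{P}^{\pi}(s,s')$ being the probability of moving from $s$ to $s'$ under $\pi$, with the rows of terminal states set to zero. Let $\gamma\in(0,1)$ and $\lambda>0$. Define the successor representation $\mathbf{\Psi}^\pi=(\mathbf{I}-\gamma\mathbf{P}^\pi)^{-1}$ and the default representation $\mathbf{Z}=\big[\operatorname{diag}(\exp(-\mathbf{r}/\lambda))-\mathbf{P}^{\pi_d}\big]^{-1}$, where $\mathbf{r}\in\mathbb{R}^{|\mathcal{S}|}$ is the vector of state rewards and $\exp$ acts entrywise. Suppose the reward function is constant and negative: $r(s)=r(s')<0$ for all $s,s'\in\mathcal{S}$. Then $\mathbf{\Psi}^\pi$ and $\mathbf{Z}$ share the same set of eigenvectors. Furthermore, if $\mathbf{\Psi}^\pi$ and $\mathbf{Z}$ are symmetric, then, ordering the eigenvectors of each matrix by their corresponding eigenvalues, the $i$-th eigenvectors of $\mathbf{\Psi}^\pi$ and $\mathbf{Z}$ are equal, and the $i$-th eigenvalues $\mu_{\mathrm{SR},i}$ of $\mathbf{\Psi}^\pi$ and $\mu_{\mathrm{DR},i}$ of $\mathbf{Z}$ satisfy $$\mu_{\mathrm{SR},i}=\Big[\gamma\Big(\mu_{\mathrm{DR},i}^{-1}-\exp\big(-r(s)/\lambda\big)+\gamma^{-1}\Big)\Big]^{-1}.$$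
   Context: Setting: a Markov decision process with finite state space $\mathcal{S}$, finite action space $\mathcal{A}$, transition function $p$, reward function $r:\mathcal{S}\to\mathbb{R}$, and a default policy $\pi_d$ assigning nonzero probability to every state-action pair. The transition matrix induced by a policy has rows for terminal states set to all zeros (and rows of non-terminal states summing to one). $\gamma$ is the discount factor of the successor representation and $\lambda>0$ is the relative importance of the deviation (KL) cost in the linearly solvable MDP defining the default representation. *)

From HB Require Import structures.
From mathcomp Require Import all_boot all_order all_algebra.
From mathcomp Require Import all_classical all_reals.
From mathcomp Require Import sequences exp.
Set Implicit Arguments. Unset Strict Implicit. Unset Printing Implicit Defensive.
Import Order.TTheory GRing.Theory Num.Theory.
Local Open Scope ring_scope.

Section MDP.
Variable R : realType.

(* States are 'I_n, actions are 'I_m. [pi s a] is the probability of action a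
   in state s, [p s a s'] the probability of moving to s' when taking a in s.
   Terminal states T have their rows set to zero. *)
Definition trans_mx (n m : nat) (T : {set 'I_n}) (pi : 'I_n -> 'I_m -> R)
  (p : 'I_n -> 'I_m -> 'I_n -> R) : 'M[R]_n :=
  \matrix_(s, s') (if s \in T then 0 else \sum_(a < m) pi s a * p s a s').

Definition SR (n : nat) (gamma : R) (P : 'M[R]_n) : 'M[R]_n :=
  invmx (1%:M - gamma *: P).

Definition DR (n : nat) (r : 'I_n -> R) (lambda : R) (P : 'M[R]_n) : 'M[R]_n :=
  invmx (diag_mx (\row_s expR (- r s / lambda)) - P).

Definition eigvec_with (n : nat) (A : 'M[R]_n) (v : 'cV[R]_n) (mu : R) : Prop :=
  v != 0 /\ A *m v = mu *: v.

Definition is_eigvec (n : nat) (A : 'M[R]_n) (v : 'cV[R]_n) : Prop :=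
  exists mu : R, eigvec_with A v mu.

End MDP.

(* With a constant reward every diagonal entry of diag(exp(-r/lambda)) equals the
   same constant c > 1, so both representations are inverses of affine functions
   of the transition matrix P: Psi = (I - gamma P)^-1 and Z = (c I - P)^-1.
   Because P is substochastic its real eigenvalues x satisfy |x| <= 1, so both
   affine matrices are invertible, and Psi and Z have exactly the eigenvectors
   of P, with eigenvalues (1 - gamma x)^-1 and (c - x)^-1.  Both maps are
   increasing in x on [-1, 1], so they order the eigenvectors identically, and
   eliminating x gives the relation between the eigenvalues. *)
From HB Require Import structures.
From mathcomp Require Import all_boot all_order all_algebra.
From mathcomp Require Import all_classical all_reals.
From mathcomp Require Import sequences exp.
Set Implicit Arguments. Unset Strict Implicit. Unset Printing Implicit Defensive.
Import Order.TTheory GRing.Theory Num.Theory.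
Local Open Scope ring_scope.

Lemma unitmx_of_ker_eq0 (F : fieldType) n (A : 'M[F]_n) :
  (forall v : 'cV_n, A *m v = 0 -> v = 0) -> A \in unitmx.
Proof.
move=> kerA; rewrite -unitmx_tr unitmxE unitfE; apply/det0P => -[w w_neq0].
move=> /(congr1 trmx); rewrite trmx_mul trmxK trmx0 => /kerA /(congr1 trmx).
by rewrite trmxK trmx0 => w0; rewrite w0 eqxx in w_neq0.
Qed.

Lemma invmx_eigen (F : fieldType) n (A : 'M[F]_n) (v : 'cV_n) a :
  A \in unitmx -> A *m v = a *: v -> invmx A *m v = a^-1 *: v.
Proof.
move=> A_unit Av; have v_eq : a *: (invmx A *m v) = v.
  by rewrite scalemxAr -Av mulKmx.
have [a0 | a_neq0] := eqVneq a 0.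
  by move: v_eq; rewrite a0 scale0r => <-; rewrite mulmx0 scaler0.
by rewrite -[in RHS]v_eq scalerA mulVf // scale1r.
Qed.

Section AffineResolvent.
Variables (F : fieldType) (n : nat) (P : 'M[F]_n) (a b : F).
Hypothesis affine_unit : a%:M - b *: P \in unitmx.

Lemma eigen_affine_invmx (v : 'cV_n) x :
  P *m v = x *: v -> invmx (a%:M - b *: P) *m v = (a - b * x)^-1 *: v.
Proof.
move=> Pv; apply: invmx_eigen => //.
by rewrite mulmxBl mul_scalar_mx -scalemxAl Pv scalerA scalerBl.
Qed.

Lemma affine_invmx_eigen (v : 'cV_n) mu : b != 0 ->
  invmx (a%:M - b *: P) *m v = mu *: v -> P *m v = ((a - mu^-1) / b) *: v.
Proof.
move=> b_neq0 /invmx_eigen; rewrite unitmx_inv invmxK => /(_ affine_unit).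
rewrite mulmxBl mul_scalar_mx -scalemxAl => Av.
rewrite mulrC -scalerA scalerBl -Av opprB addrC subrK scalerA mulVf //.
by rewrite scale1r.
Qed.

End AffineResolvent.

Section Substochastic.
Variables (R : realFieldType) (n : nat) (P : 'M[R]_n).
Hypotheses (P_ge0 : forall i j, 0 <= P i j) (P_rowsum : forall i, \sum_j P i j <= 1).

(* Evaluate P v = x v at an entry of v of maximal modulus. *)
Lemma substochastic_eigenvalue_le1 (v : 'cV_n) x :
  v != 0 -> P *m v = x *: v -> `|x| <= 1.
Proof.
move=> /cV0Pn[i0 vi0] Pv.
have [i _ i_max] := arg_maxP (fun i => `|v i 0|) (isT : predT i0).
have vi_gt0 : 0 < `|v i 0| by apply: lt_le_trans (i_max i0 isT); rewrite normr_gt0.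
have xvi : x * v i 0 = \sum_j P i j * v j 0.
  by move/matrixP: Pv => /(_ i 0); rewrite !mxE => <-.
rewrite -(ler_pM2r vi_gt0) mul1r -normrM xvi.
apply: le_trans (ler_norm_sum _ _ _) _.
apply: le_trans (_ : \sum_j P i j * `|v i 0| <= _); last first.
  by rewrite -mulr_suml ler_piMl.
apply: ler_sum => j _; rewrite normrM ger0_norm // ler_wpM2l //.
exact: i_max.
Qed.

Lemma substochastic_affine_unitmx a b : `|b| < `|a| -> a%:M - b *: P \in unitmx.
Proof.
move=> ba; apply: unitmx_of_ker_eq0 => v.
rewrite mulmxBl mul_scalar_mx -scalemxAl => /eqP; rewrite subr_eq0 => /eqP av.
apply/eqP; apply: contraLR ba => v_neq0; rewrite -leNgt.
have [b0 | b_neq0] := eqVneq b 0.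
  move: av; rewrite b0 scale0r => /eqP; rewrite scaler_eq0 (negPf v_neq0) orbF.
  by move=> /eqP ->; rewrite normr0.
have Pv : P *m v = (a / b) *: v by rewrite mulrC -scalerA av scalerA mulVf ?scale1r.
have := substochastic_eigenvalue_le1 v_neq0 Pv.
by rewrite normrM normfV ler_pdivrMr ?normr_gt0 // mul1r.
Qed.

End Substochastic.

Lemma lef_affine_inv (R : realFieldType) (a b x y : R) :
  0 < b -> b * x < a -> b * y < a -> ((a - b * x)^-1 <= (a - b * y)^-1) = (x <= y).
Proof.
move=> b_gt0 bxa bya; rewrite lef_pV2 ?posrE ?subr_gt0 //.
by rewrite lerD2l lerN2 ler_pM2l.
Qed.

Section TransitionMatrix.
Variables (R : realType) (n m : nat) (T : {set 'I_n}).
Variables (pi : 'I_n -> 'I_m -> R) (p : 'I_n -> 'I_m -> 'I_n -> R).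
Hypotheses (p_ge0 : forall s a s', 0 <= p s a s') (p_sum1 : forall s a, \sum_s' p s a s' = 1).
Hypotheses (pi_ge0 : forall s a, 0 <= pi s a) (pi_sum1 : forall s, \sum_a pi s a = 1).

Lemma trans_mx_ge0 s s' : 0 <= trans_mx T pi p s s'.
Proof.
rewrite mxE; case: ifP => // _.
by apply: sumr_ge0 => a _; rewrite mulr_ge0.
Qed.

Lemma trans_mx_rowsum_le1 s : \sum_s' trans_mx T pi p s s' <= 1.
Proof.
have [s_term | s_live] := boolP (s \in T).
  by rewrite big1 // => s' _; rewrite mxE s_term.
under eq_bigr => s' _ do rewrite mxE (negPf s_live).
rewrite exchange_big /=.
under eq_bigr => a _ do rewrite -mulr_sumr p_sum1 mulr1.
by rewrite pi_sum1.
Qed.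

End TransitionMatrix.

Section EigvecAffineResolvent.
Variables (R : realType) (n : nat) (P : 'M[R]_n) (a b : R).
Hypotheses (affine_unit : a%:M - b *: P \in unitmx) (b_neq0 : b != 0).

Lemma eigvec_with_affine_invmx (v : 'cV_n) x :
  eigvec_with P v x -> eigvec_with (invmx (a%:M - b *: P)) v (a - b * x)^-1.
Proof. by move=> [v_neq0 Pv]; split; last exact: eigen_affine_invmx. Qed.

Lemma affine_invmx_eigvec_with (v : 'cV_n) mu :
  eigvec_with (invmx (a%:M - b *: P)) v mu -> eigvec_with P v ((a - mu^-1) / b).
Proof. by move=> [v_neq0 Av]; split; last exact: affine_invmx_eigen. Qed.

Lemma is_eigvec_affine_invmx (v : 'cV_n) :
  is_eigvec (invmx (a%:M - b *: P)) v <-> is_eigvec P v.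
Proof.
split=> -[mu v_eig]; eexists.
  exact: affine_invmx_eigvec_with v_eig.
exact: eigvec_with_affine_invmx v_eig.
Qed.

End EigvecAffineResolvent.

(* Eliminates the eigenvalue [x] of [P] from [mu = (1 - gamma x)^-1] and
   [nu = (c - x)^-1]. *)
Definition DR_eigenvalue_of_SR (R : fieldType) (gamma c mu : R) : R :=
  (c - (1 - mu^-1) / gamma)^-1.

Section ConstantReward.
Variables (R : realType) (n : nat) (P : 'M[R]_n) (r : 'I_n -> R) (gamma lambda : R).
Hypotheses (P_ge0 : forall i j, 0 <= P i j) (P_rowsum : forall i, \sum_j P i j <= 1).
Hypotheses (gamma_gt0 : 0 < gamma) (gamma_lt1 : gamma < 1) (lambda_gt0 : 0 < lambda).
Hypotheses (r_const : forall s s', r s = r s') (r_lt0 : forall s, r s < 0).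

Let c s := expR (- r s / lambda).

Let c_gt1 s : 1 < c s.
Proof. by rewrite pexpR_gt1 // divr_gt0 // oppr_gt0. Qed.

Let gamma_neq0 : gamma != 0.
Proof. by rewrite gt_eqF. Qed.

Lemma SR_unitmx : 1%:M - gamma *: P \in unitmx.
Proof. by apply: substochastic_affine_unitmx => //; rewrite normr1 gtr0_norm. Qed.

Lemma DR_const_reward s : DR r lambda P = invmx ((c s)%:M - 1 *: P).
Proof.
rewrite /DR scale1r; congr (invmx (_ - _)).
by apply/matrixP => i j; rewrite !mxE (r_const i s); case: (i == j).
Qed.

Lemma DR_unitmx s : (c s)%:M - 1 *: P \in unitmx.
Proof.
apply: substochastic_affine_unitmx => //.
by rewrite normr1 gtr0_norm ?(lt_trans ltr01).
Qed.

Lemma is_eigvec_SR_DR v : is_eigvec (SR gamma P) v <-> is_eigvec (DR r lambda P) v.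
Proof.
have [-> | /cV0Pn[s _]] := eqVneq v 0; first by split=> -[? []]; rewrite eqxx.
rewrite (DR_const_reward s).
apply: iff_trans (is_eigvec_affine_invmx SR_unitmx gamma_neq0 v) (iff_sym _).
exact: is_eigvec_affine_invmx (DR_unitmx s) (oner_neq0 R) v.
Qed.

Let SR_eigvec_with v mu (x := (1 - mu^-1) / gamma) :
  eigvec_with (SR gamma P) v mu -> [/\ eigvec_with P v x, x <= 1 & mu = (1 - gamma * x)^-1].
Proof.
move=> SR_eig; have P_eig := affine_invmx_eigvec_with SR_unitmx gamma_neq0 SR_eig.
split=> //; last by rewrite /x mulrC mulfVK // opprB addrC subrK invrK.
have [v_neq0 Pv] := P_eig.
by have /ler_normlP[] := substochastic_eigenvalue_le1 P_ge0 P_rowsum v_neq0 Pv.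
Qed.

Lemma eigvec_with_DR_of_SR s v mu (nu := DR_eigenvalue_of_SR gamma (c s) mu) :
  eigvec_with (SR gamma P) v mu ->
  eigvec_with (DR r lambda P) v nu /\ mu = (gamma * (nu^-1 - c s + gamma^-1))^-1.
Proof.
move=> /SR_eigvec_with[P_eig _ ->]; split.
  rewrite (DR_const_reward s) /nu /DR_eigenvalue_of_SR -[X in c s - X]mul1r.
  exact (eigvec_with_affine_invmx (DR_unitmx s) P_eig).
rewrite /nu /DR_eigenvalue_of_SR invrK [c s - _]addrC addrK mulrDr mulfV //.
by rewrite mulrN addrC.
Qed.

Lemma DR_eigenvalue_of_SR_le s v w mu mu' :
  eigvec_with (SR gamma P) v mu -> eigvec_with (SR gamma P) w mu' -> mu <= mu' ->
  DR_eigenvalue_of_SR gamma (c s) mu <= DR_eigenvalue_of_SR gamma (c s) mu'.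
Proof.
move=> SR_v SR_w; rewrite /DR_eigenvalue_of_SR.
have [_ x_le1 mu_x] := SR_eigvec_with SR_v; have [_ x'_le1 mu'_x] := SR_eigvec_with SR_w.
set x := (1 - mu^-1) / gamma in x_le1 mu_x *; set x' := (1 - mu'^-1) / gamma in x'_le1 mu'_x *.
have gamma_lt1' y : y <= 1 -> gamma * y < 1.
  by move=> y_le1; apply: le_lt_trans gamma_lt1; rewrite -[leRHS]mulr1 ler_pM2l.
have lt_c y : y <= 1 -> 1 * y < c s by rewrite mul1r => /le_lt_trans; apply.
rewrite mu_x mu'_x lef_affine_inv ?gamma_lt1' //.
by rewrite -(lef_affine_inv ltr01 (lt_c _ x_le1) (lt_c _ x'_le1)) !mul1r.
Qed.

End ConstantReward.

Theorem theorem3p1 (R : realType) (n m : nat) (T : {set 'I_n})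
  (pi : 'I_n -> 'I_m -> R) (p : 'I_n -> 'I_m -> 'I_n -> R)
  (r : 'I_n -> R) (gamma lambda : R) :
  (forall s a s', 0 <= p s a s') ->
  (forall s a, \sum_(s' < n) p s a s' = 1) ->
  (forall s a, 0 < pi s a) ->
  (forall s, \sum_(a < m) pi s a = 1) ->
  0 < gamma -> gamma < 1 -> 0 < lambda ->
  (forall s s', r s = r s') -> (forall s, r s < 0) ->
  let P := trans_mx T pi p in
  let Psi := SR gamma P in
  let Z := DR r lambda P in
  (forall v : 'cV[R]_n, is_eigvec Psi v <-> is_eigvec Z v) /\
  (Psi^T = Psi -> Z^T = Z ->
   forall (V : 'M[R]_n) (mu : 'I_n -> R),
     V \in unitmx ->
     (forall i, eigvec_with Psi (col i V) (mu i)) ->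
     (forall i j : 'I_n, (i <= j)%N -> mu i <= mu j) ->
     exists nu : 'I_n -> R,
       (forall i j : 'I_n, (i <= j)%N -> nu i <= nu j) /\
       (forall i, eigvec_with Z (col i V) (nu i) /\
          mu i = (gamma * ((nu i)^-1 - expR (- r i / lambda) + gamma^-1))^-1)).
Proof.
move=> p_ge0 p_sum1 pi_gt0 pi_sum1 gamma_gt0 gamma_lt1 lambda_gt0 r_const r_lt0 P Psi Z.
have pi_ge0 s a : 0 <= pi s a by exact/ltW.
have P_ge0 := trans_mx_ge0 T p_ge0 pi_ge0.
have P_rowsum := trans_mx_rowsum_le1 T p_sum1 pi_sum1.
split=> [v | _ _ V mu _ Psi_eig mu_mono]; first exact: is_eigvec_SR_DR.
exists (fun i => DR_eigenvalue_of_SR gamma (expR (- r i / lambda)) (mu i)).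
split=> [i j ij | i]; last exact: eigvec_with_DR_of_SR.
rewrite (r_const i j).
exact: DR_eigenvalue_of_SR_le (Psi_eig i) (Psi_eig j) (mu_mono i j ij).
Qed.
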